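(* Let $G$ be a subgroup of $\mathrm{Aut}(T)$, $X$ a minimal compact $G$-space and $\Phi:X\to\mathrm{Sub}(G)$ a lower semi-continuous $G$-equivariant map. Then the map $X\to\mathcal{F}(\partial T)$, $x\mapsto\mathrm{Fix}(\Phi(x))$, is continuous.
   Context: $T$ is a locally finite rooted tree, $\mathrm{Aut}(T)$ its root-fixing automorphism group, and $\partial T$ its boundary. $\mathrm{Sub}(G)$ is the space of subgroups of $G$ with the Chabauty topology (product topology on $\{0,1\}^G$) and conjugation action. $\Phi$ is lower semi-continuous if for every $g\in G$ the set $\{x\in X:g\in\Phi(x)\}$ is open. $\mathcal{F}(\partial T)$ is the space of closed subsets of $\partial T$ with the Hausdorff (Vietoris) topology, and $\mathrm{Fix}(H)$ denotes the set of points of $\partial T$ fixed by $H$. *)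

From HB Require Import structures.
From mathcomp Require Import all_boot all_order all_fingroup.
From mathcomp Require Import all_classical all_reals topology.
Set Implicit Arguments. Unset Strict Implicit. Unset Printing Implicit Defensive.
Local Open Scope classical_set_scope.

(** Level [n] is the finite set [L n] of vertices at distance [n] from the
   root, [par n : L n.+1 -> L n] sends a vertex to its parent, and level 0
   consists of the root alone.  Finiteness of every level is exactly local
   finiteness of a rooted tree. *)
Record rtree := RTree {
  lvl : nat -> finType;
  par : forall n, lvl n.+1 -> lvl n;
  root_unique : #|lvl 0| = 1 }.

Section Tree.
Variable T : rtree.

Definition autT := forall n, {perm lvl T n}.

(** Root-fixing automorphisms of [T]: level-wise permutations commuting
   with the parent map. *)
Definition is_aut (g : autT) : Prop :=
  forall n (v : lvl T n.+1), par (g n.+1 v) = g n (par v).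

Definition aut_one : autT := fun n => 1%g.
Definition aut_mul (g h : autT) : autT := fun n => (g n * h n)%g.
Definition aut_inv (g : autT) : autT := fun n => ((g n)^-1)%g.

Definition subgroup_of_Aut (G : set autT) : Prop :=
  [/\ G `<=` is_aut, G aut_one,
      (forall g h, G g -> G h -> G (aut_mul g h)) &
      (forall g, G g -> G (aut_inv g))].

Definition is_subgroup (G H : set autT) : Prop :=
  [/\ H `<=` G, H aut_one,
      (forall g h, H g -> H h -> H (aut_mul g h)) &
      (forall g, H g -> H (aut_inv g))].

Definition seqT := forall n, lvl T n.
Definition boundary : set seqT := [set r : seqT | forall n, par (r n.+1) = r n].

(** Its topology: the (product / cylinder) topology. A subset [U] of the
   boundary is open iff each ray in [U] has a level [n] such that every ray
   agreeing with it at level [n] lies in [U]. *)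
Definition bopen (U : set seqT) : Prop :=
  U `<=` boundary /\
  forall r, U r -> exists n, forall r', boundary r' -> r' n = r n -> U r'.

Definition aut_act (g : autT) (r : seqT) : seqT := fun n => g n (r n).
Definition Fix (H : set autT) : set seqT :=
  [set r | boundary r /\ forall h, H h -> aut_act h r = r].

End Tree.

(** Continuity of a map into [F(∂T)] equipped with the Vietoris (= Hausdorff)
   topology: preimages of the subbasic sets [{F | F ⊆ U}] and
   [{F | F ∩ U ≠ ∅}], [U] open in [∂T], are open. *)
Definition vietoris_continuous (T : rtree) (X : topologicalType)
  (F : X -> set (seqT T)) : Prop :=
  forall U, bopen U ->
    open [set x | F x `<=` U] /\ open [set x | F x `&` U !=set0].

(** [X] is a compact G-space (G discrete, acting by homeomorphisms). *)
Definition compact_Gspace (T : rtree) (G : set (autT T))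
  (X : topologicalType) (act : autT T -> X -> X) : Prop :=
  [/\ compact [set: X], hausdorff_space X,
      (forall x, act (aut_one T) x = x),
      (forall g h x, G g -> G h -> act (aut_mul g h) x = act g (act h x)) &
      (forall g, G g -> continuous (act g))].

Definition minimal_Gspace (T : rtree) (G : set (autT T))
  (X : topologicalType) (act : autT T -> X -> X) : Prop :=
  forall A : set X, closed A ->
    (forall g x, G g -> A x -> A (act g x)) -> A = set0 \/ A = setT.

(** Lower semi-continuity of [Φ : X -> Sub(G)] (Chabauty topology). *)
Definition lsc (T : rtree) (G : set (autT T)) (X : topologicalType)
  (Phi : X -> set (autT T)) : Prop :=
  forall g, G g -> open [set x | Phi x g].

Definition equivariant (T : rtree) (G : set (autT T)) (X : topologicalType)
  (act : autT T -> X -> X) (Phi : X -> set (autT T)) : Prop :=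
  forall g x, G g ->
    Phi (act g x) = [set aut_mul (aut_mul g h) (aut_inv g) | h in Phi x].

From mathcomp Require Import all_boot all_order all_fingroup.
From mathcomp Require Import all_classical all_reals topology.
Set Implicit Arguments. Unset Strict Implicit. Unset Printing Implicit Defensive.
Local Open Scope classical_set_scope.

(* For a level n, let P_n(x) be the set of level-n vertices lying on a ray
   fixed by Phi(x).  Lower semi-continuity of Phi means that a vertex moved by
   Phi(x) is still moved by Phi(y) for y near x; with Koenig's lemma this gives
   Fix(Phi(y)) inside any open neighbourhood of Fix(Phi(x)) for y near x, and in
   particular P_n(y) is a subset of P_n(x).  Hence {y | k <= #P_n(y)} is closed;
   it is G-invariant by equivariance, so minimality makes #P_n constant.  Thus
   P_n(y) = P_n(x) near x: every cylinder meeting Fix(Phi(x)) meets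
   Fix(Phi(y)). *)

Section Rays.
Variable T : rtree.
Implicit Types (A : forall n, lvl T n -> Prop) (r : seqT T).

Definition cylinder n (v : lvl T n) : set (seqT T) :=
  [set r | boundary r /\ r n = v].

Lemma bopen_cylinder U r : bopen U -> U r -> exists n, cylinder (r n) `<=` U.
Proof. by move=> [_ openU] /openU[n cylU]; exists n => r' [br' e]; exact: cylU r' br' e. Qed.

Lemma lvl0_eq (u w : lvl T 0) : u = w.
Proof.
have /fintype_le1P le1 := eq_leq (root_unique T).
by rewrite (le1 u) (le1 w).
Qed.

Definition par_closed A := forall n (v : lvl T n.+1), A n.+1 v -> A n (par v).

Lemma par_closed_ray A r m i :
  par_closed A -> boundary r -> i <= m -> A m (r m) -> A i (r i).
Proof.
move=> pA br /subnKC <-; elim: (m - i) => [|d IHd]; first by rewrite addn0.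
by rewrite addnS => /pA; rewrite br.
Qed.

Definition extendable A k (v : lvl T k) :=
  forall m, exists r, [/\ boundary r, r k = v & A m (r m)].

Lemma extendable_child A k (v : lvl T k) : par_closed A -> extendable A v ->
  exists c : lvl T k.+1, par c = v /\ extendable A c.
Proof.
move=> pA ev; apply: contrapT => /forallNP nochild.
have /choice[m mP] : forall c : lvl T k.+1, exists m, par c = v ->
    ~ exists r, [/\ boundary r, r k.+1 = c & A m (r m)].
  move=> c; case: (pselect (par c = v)) => [cv|]; last by exists 0.
  have /existsNP[m mP] : ~ extendable A c by move=> ec; exact: nochild c (conj cv ec).
  by exists m.
(* Finitely many children: one level bounds all their failures at once. *)
have [r [br rv Ar]] := ev (\max_c m c).
apply: (mP (r k.+1)); first by rewrite br.
by exists r; split=> //; apply: par_closed_ray pA br (leq_bigmax _) Ar.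
Qed.

Lemma konig A : par_closed A -> (forall m, exists r, boundary r /\ A m (r m)) ->
  exists2 r, boundary r & forall k, A k (r k).
Proof.
move=> pA inhA; have [r0 _] := inhA 0.
have e0 : extendable A (r0 0).
  by move=> m; have [r [br Ar]] := inhA m; exists r; split=> //; exact: lvl0_eq.
pose next k (s : {v : lvl T k | extendable A v}) : {v : lvl T k.+1 | extendable A v} :=
  let c := cid (extendable_child pA (svalP s)) in exist _ (sval c) (proj2 (svalP c)).
have par_next k s : par (sval (next k s)) = sval s by rewrite /next; case: cid => ? [].
pose fix ray k := if k is k'.+1 then next k' (ray k') else exist _ (r0 0) e0.
exists (fun k => sval (ray k)) => [n|k]; first exact: par_next.
by case: (ray k) => v ev /=; have [r [_ <-]] := ev k.
Qed.

End Rays.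

Section FixedRays.
Variable T : rtree.
Implicit Types (H : set (autT T)) (r : seqT T).

Definition fixed_vertex H n (v : lvl T n) := forall h, H h -> h n v = v.

Lemma fixed_vertex_par_closed H : H `<=` @is_aut T -> par_closed (fixed_vertex H).
Proof. by move=> HA n v fv h Hh; rewrite -(HA h Hh _ v) fv. Qed.

Lemma FixP H r : Fix H r <-> boundary r /\ forall n, fixed_vertex H (r n).
Proof.
split=> [[br fr]|[br fr]]; split=> //.
  by move=> n h Hh; exact: (congr1 (@^~ n) (fr h Hh)).
by move=> h Hh; apply: functional_extensionality_dep => n; exact: fr.
Qed.

Lemma Fix_conj H g r : is_aut (aut_inv g) -> Fix H r ->
  Fix [set aut_mul (aut_mul g h) (aut_inv g) | h in H] (aut_act (aut_inv g) r).
Proof.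
move=> ginv /FixP[br fr]; apply/FixP; split=> [n|n _ [h Hh <-]].
  by rewrite /aut_act ginv br.
by rewrite /aut_act /aut_mul /aut_inv !permM permKV (fr n h Hh).
Qed.

Lemma Fix_cylinder_level H (S : set (seqT T)) : H `<=` @is_aut T ->
  (forall r, Fix H r -> exists n, cylinder (r n) `<=` S) ->
  exists N, forall v : lvl T N, fixed_vertex H v -> cylinder v `<=` S.
Proof.
move=> HA openS; apply: contrapT => /forallNP noN.
pose bad k (v : lvl T k) := fixed_vertex H v /\ ~ cylinder v `<=` S.
have bad_par : par_closed bad.
  move=> n v [fv nS]; split; first exact: fixed_vertex_par_closed.
  by move=> Sp; apply: nS => r [br rv]; apply: Sp; split=> //; rewrite -rv br.
have [r br rbad] : exists2 r, boundary r & forall k, bad k (r k).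
  apply: konig bad_par _ => m; have /existsNP[v /not_implyP[fv nS]] := noN m.
  have /existsNP[r /not_implyP[[br rv] _]] := nS.
  by exists r; split=> //; rewrite rv.
have [n Sn] := openS r (proj2 (FixP H r) (conj br (fun k => (rbad k).1))).
by case: (rbad n) => _ /(_ Sn).
Qed.

Definition Fix_level H n : {set lvl T n} :=
  [set v | `[< exists2 r, Fix H r & r n = v >]].

Lemma Fix_levelP H n v : reflect (exists2 r, Fix H r & r n = v) (v \in Fix_level H n).
Proof. by rewrite inE; apply: asboolP. Qed.

End FixedRays.

Section FixContinuity.
Variables (T : rtree) (G : set (autT T)) (X : topologicalType)
  (act : autT T -> X -> X) (Phi : X -> set (autT T)).
Hypotheses (sG : subgroup_of_Aut G) (PhiG : forall x, is_subgroup G (Phi x))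
  (lscPhi : lsc G Phi) (eqvPhi : equivariant G act Phi).

Lemma Phi_sub_aut x : Phi x `<=` @is_aut T.
Proof. by case: sG (PhiG x) => GA _ _ _ [PG _ _ _] h /PG /GA. Qed.

Lemma near_fixed_vertex x n : \forall y \near x,
  forall v : lvl T n, fixed_vertex (Phi y) v -> fixed_vertex (Phi x) v.
Proof.
apply: filter_forall => v; case: (pselect (fixed_vertex (Phi x) v)) => [fv|].
  by apply: nearW.
move=> /existsNP[h /not_implyP[Phxh hv]].
have Gh : G h by case: (PhiG x) => + _ _ _; apply.
apply: filterS (open_nbhs_nbhs (conj (lscPhi Gh) Phxh)) => y Phyh fv.
by case: hv; exact: fv.
Qed.

Lemma near_Fix_sub x (S : set (seqT T)) :
  (forall r, Fix (Phi x) r -> exists n, cylinder (r n) `<=` S) ->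
  \forall y \near x, Fix (Phi y) `<=` S.
Proof.
move=> openS; have [N cylS] := Fix_cylinder_level (@Phi_sub_aut x) openS.
apply: filterS (near_fixed_vertex x N) => y fixyx r /FixP[br fr].
exact: cylS (fixyx _ (fr N)) r (conj br erefl).
Qed.

Lemma near_Fix_level_sub x n :
  \forall y \near x, Fix_level (Phi y) n \subset Fix_level (Phi x) n.
Proof.
have : \forall y \near x, Fix (Phi y) `<=` [set r | r n \in Fix_level (Phi x) n].
  apply: near_Fix_sub => r Fr; exists n => r' [_ rn] /=.
  by rewrite rn; apply/Fix_levelP; exists r.
apply: filterS => y FyS; apply/fintype.subsetP => _ /Fix_levelP[r Fr <-].
exact: FyS.
Qed.

Lemma card_Fix_level_act n g x :
  G g -> #|Fix_level (Phi x) n| <= #|Fix_level (Phi (act g x)) n|.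
Proof.
move=> Gg; have ginv : is_aut (aut_inv g) by case: sG => GA _ _ Ginv; exact/GA/Ginv.
rewrite -(card_imset _ (@perm_inj _ ((g n)^-1)%g)).
apply/subset_leq_card/fintype.subsetP => _ /imsetP[_ /Fix_levelP[r Fr <-] ->].
apply/Fix_levelP; exists (aut_act (aut_inv g) r) => //.
by rewrite eqvPhi //; exact: Fix_conj.
Qed.

Lemma closed_card_Fix_level_ge n k : closed [set y | k <= #|Fix_level (Phi y) n|].
Proof.
rewrite -[S in closed S]setCK; apply: open_closedC; rewrite openE => x /= ltx.
apply: filterS (near_Fix_level_sub x n) => y sub /= le_y; apply: ltx.
exact: leq_trans le_y (subset_leq_card sub).
Qed.

Hypothesis minX : minimal_Gspace G act.

Lemma card_Fix_level_le n x y : #|Fix_level (Phi x) n| <= #|Fix_level (Phi y) n|.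
Proof.
set k := #|_|; set A := [set z | k <= #|Fix_level (Phi z) n|].
have Ax : A x by rewrite /A /= leqnn.
have invA g z : G g -> A z -> A (act g z).
  by move=> Gg kz; exact: leq_trans kz (card_Fix_level_act n z Gg).
have [A0|AT] := minX (@closed_card_Fix_level_ge n k) invA.
  by move: Ax; rewrite /A A0.
by have : A y by rewrite /A AT.
Qed.

Lemma near_Fix_level_eq x n :
  \forall y \near x, Fix_level (Phi y) n = Fix_level (Phi x) n.
Proof.
apply: filterS (near_Fix_level_sub x n) => y sub; apply/eqP.
by rewrite eqEcard sub card_Fix_level_le.
Qed.

End FixContinuity.

Theorem proposition5p27 (T : rtree) (G : set (autT T))
  (X : topologicalType) (act : autT T -> X -> X) (Phi : X -> set (autT T)) :
  subgroup_of_Aut G ->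
  compact_Gspace G act ->
  minimal_Gspace G act ->
  (forall x, is_subgroup G (Phi x)) ->
  lsc G Phi ->
  equivariant G act Phi ->
  vietoris_continuous (fun x => Fix (Phi x)).
Proof.
move=> sG _ minX PhiG lscPhi eqvPhi U bU; split; rewrite openE.
  move=> x FxU; apply: (near_Fix_sub sG PhiG lscPhi) => r Fr.
  exact: bopen_cylinder bU (FxU r Fr).
move=> x [r [Fr Ur]]; have [n cylU] := bopen_cylinder bU Ur.
apply: filterS (near_Fix_level_eq sG PhiG lscPhi eqvPhi minX x n) => y eqyx.
have /Fix_levelP[r' Fr' r'r] : r n \in Fix_level (Phi y) n.
  by rewrite eqyx; apply/Fix_levelP; exists r.
by exists r'; split=> //; apply: cylU; split=> //; case: Fr'.
Qed.
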